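(* For a semigroup $S$ the following are equivalent: (i) $S$ is intra-regular; (ii) $\underline{A}\cap\underline{B}\subseteq\underline{A}\circ\underline{B}$ for every IF left ideal $A=(\mu_A,\nu_A)$ and every IF right ideal $B=(\mu_B,\nu_B)$ of $S$.
   Context: A semigroup $S$ is intra-regular if for every $x\in S$ there are $a,b\in S$ with $x=ax^2b$. An intuitionistic fuzzy (IF) subset of $S$ is a pair $A=(\mu_A,\nu_A)$ of functions $S\to[0,1]$ with $\mu_A(x)+\nu_A(x)\le1$ for all $x$. $A$ is an IF right (resp. left) ideal of $S$ if $\mu_A(xy)\ge\mu_A(x)$ and $\nu_A(xy)\le\nu_A(x)$ (resp. $\mu_A(xy)\ge\mu_A(y)$ and $\nu_A(xy)\le\nu_A(y)$) for all $x,y\in S$. For $x\in S$ and $\alpha,\beta\in[0,1]$ with $\alpha+\beta\le1$, the IF point $x_{(\alpha,\beta)}$ is the IF subset of $S$ with value $(\alpha,\beta)$ at $x$ and $(0,1)$ elsewhere (so all points $x_{(0,1)}$ coincide). $\underline{S}$ is the set of all IF points of $S$; it is a semigroup under $x_{(\alpha,\beta)}\circ y_{(\gamma,\delta)}=(xy)_{(\min(\alpha,\gamma),\max(\beta,\delta))}$. For an IF subset $A$, $\underline{A}=\{x_{(\alpha,\beta)}\in\underline{S}:\mu_A(x)\ge\alpha,\ \nu_A(x)\le\beta\}$. For subsets $X,Y\subseteq\underline{S}$, $X\circ Y=\{p\circ q:p\in X,q\in Y\}$. *)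

From Stdlib Require Import Reals.
Open Scope R_scope.

Definition associative {S : Type} (op : S -> S -> S) : Prop :=
  forall x y z, op x (op y z) = op (op x y) z.

Definition intra_regular {S : Type} (op : S -> S -> S) : Prop :=
  forall x, exists a b, x = op (op a (op x x)) b.

Definition IF_subset {S : Type} (mu nu : S -> R) : Prop :=
  forall x, 0 <= mu x <= 1 /\ 0 <= nu x <= 1 /\ mu x + nu x <= 1.

Definition IF_left_ideal {S : Type} (op : S -> S -> S) (mu nu : S -> R) : Prop :=
  IF_subset mu nu /\ forall x y, mu (op x y) >= mu y /\ nu (op x y) <= nu y.

Definition IF_right_ideal {S : Type} (op : S -> S -> S) (mu nu : S -> R) : Prop :=
  IF_subset mu nu /\ forall x y, mu (op x y) >= mu x /\ nu (op x y) <= nu x.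

(* IF points are themselves IF subsets, represented as functions S -> R*R
   (pair (membership, non-membership)).  [is_point p x a b] says p = x_(a,b):
   value (a,b) at x and (0,1) elsewhere.  Hence all x_(0,1) coincide. *)
Definition is_point {S : Type} (p : S -> R * R) (x : S) (a b : R) : Prop :=
  0 <= a /\ 0 <= b /\ a + b <= 1 /\
  forall y, (y = x -> p y = (a, b)) /\ (y <> x -> p y = (0, 1)).

Definition IF_points (S : Type) : (S -> R * R) -> Prop :=
  fun p => exists x a b, is_point p x a b.

Definition under {S : Type} (mu nu : S -> R) : (S -> R * R) -> Prop :=
  fun p => exists x a b, is_point p x a b /\ mu x >= a /\ nu x <= b.

Definition point_prod {S : Type} (op : S -> S -> S) (p q r : S -> R * R) : Prop :=
  exists x a b y c d, is_point p x a b /\ is_point q y c d /\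
    is_point r (op x y) (Rmin a c) (Rmax b d).

Definition set_prod {S : Type} (op : S -> S -> S) (X Y : (S -> R * R) -> Prop)
  : (S -> R * R) -> Prop :=
  fun r => exists p q, X p /\ Y q /\ point_prod op p q r.

(* (i) => (ii): if x = c x^2 d then x_(a,b) = (cx)_(a,b) o (xd)_(a,b), and cx, xd
   inherit the grades of x from the left ideal A and the right ideal B.
   (ii) => (i): take for A and B the characteristic IF sets of the principal
   one-sided ideals x U Sx and x U xS; then x_(1,0) lies in both, so
   x = u v with u in x U Sx and v in x U xS, and each of the four cases
   rewrites x in the form a x^2 b by associativity. *)

From Stdlib Require Import Reals Lra Classical ClassicalEpsilon.
Open Scope R_scope.
Set Implicit Arguments.

Section Points.

Variable S : Type.

Definition pt (x : S) (a b : R) : S -> R * R :=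
  fun y => if excluded_middle_informative (y = x) then (a, b) else (0, 1).

Lemma pt_is_point (x : S) a b :
  0 <= a -> 0 <= b -> a + b <= 1 -> is_point (pt x a b) x a b.
Proof.
  intros; repeat split; auto; intros; unfold pt;
    destruct (excluded_middle_informative (y = x)); congruence.
Qed.

Lemma is_point_at (p : S -> R * R) x a b : is_point p x a b -> p x = (a, b).
Proof. intros (_ & _ & _ & Hp); apply (Hp x); reflexivity. Qed.

Lemma is_point_off (p : S -> R * R) x a b y :
  is_point p x a b -> y <> x -> p y = (0, 1).
Proof. intros (_ & _ & _ & Hp); apply (Hp y). Qed.

Lemma is_point_unique (p : S -> R * R) x a b x' a' b' :
  is_point p x a b -> is_point p x' a' b' -> a <> 0 -> x' = x /\ a' = a.
Proof.
  intros Hp Hp' Ha.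
  destruct (classic (x = x')) as [<- | ne].
  - apply is_point_at in Hp, Hp'; rewrite Hp in Hp'.
    now inversion Hp'.
  - apply is_point_at in Hp; rewrite (is_point_off Hp' ne) in Hp.
    inversion Hp; lra.
Qed.

Lemma under_pt (mu nu : S -> R) y a b :
  0 <= a -> 0 <= b -> a + b <= 1 -> mu y >= a -> nu y <= b ->
  under mu nu (pt y a b).
Proof. intros; exists y, a, b; auto using pt_is_point. Qed.

(* The witness point of [under] may differ from [x] only when [p] is the
   empty point x_(0,1), which every IF subset contains. *)
Lemma under_at_point (mu nu : S -> R) p x a b :
  IF_subset mu nu -> is_point p x a b -> under mu nu p -> mu x >= a /\ nu x <= b.
Proof.
  intros Hsub Hp (x' & a' & b' & Hp' & Hmu & Hnu).
  destruct (classic (x = x')) as [<- | ne].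
  - apply is_point_at in Hp, Hp'; rewrite Hp in Hp'.
    now inversion Hp'; subst.
  - apply is_point_at in Hp; rewrite (is_point_off Hp' ne) in Hp.
    inversion Hp; subst; destruct (Hsub x); lra.
Qed.

Lemma under_full_point (mu nu : S -> R) q u b :
  is_point q u 1 b -> under mu nu q -> mu u >= 1.
Proof.
  intros Hq (u' & a' & b' & Hq' & Hmu & _).
  destruct (is_point_unique Hq Hq') as [-> ->]; [lra | exact Hmu].
Qed.

Variable op : S -> S -> S.

Lemma point_prod_pt (p : S -> R * R) y z a b :
  is_point p (op y z) a b -> point_prod op (pt y a b) (pt z a b) p.
Proof.
  intros Hp; pose proof Hp as (Ha & Hb & Hab & _).
  exists y, a, b, z, a, b; split; [|split]; auto using pt_is_point.
  now rewrite Rmin_left, Rmax_left by lra.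
Qed.

Lemma point_prod_full (q q' r : S -> R * R) x b :
  point_prod op q q' r -> is_point r x 1 b ->
  exists u v bu bv, x = op u v /\ is_point q u 1 bu /\ is_point q' v 1 bv.
Proof.
  intros (u & a & bu & v & c & bv & Hq & Hq' & Hr) Hx.
  destruct (is_point_unique Hx Hr) as [Huv Hmin]; [lra|].
  pose proof (Rmin_l a c); pose proof (Rmin_r a c).
  pose proof Hq as (_ & Hbu & Ha & _); pose proof Hq' as (_ & Hbv & Hc & _).
  assert (a = 1) as -> by lra; assert (c = 1) as -> by lra.
  now exists u, v, bu, bv; subst x.
Qed.

End Points.

Section CharacteristicIdeals.

Variable S : Type.

Definition chi (P : S -> Prop) : S -> R :=
  fun y => if excluded_middle_informative (P y) then 1 else 0.

Definition chi_compl (P : S -> Prop) : S -> R := fun y => 1 - chi P y.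

Lemma chi_IF_subset (P : S -> Prop) : IF_subset (chi P) (chi_compl P).
Proof.
  intro y; unfold chi_compl, chi.
  destruct (excluded_middle_informative (P y)); lra.
Qed.

Lemma chi_mono (P : S -> Prop) {y z} : (P y -> P z) -> chi P z >= chi P y.
Proof.
  intro Hyz; unfold chi.
  destruct (excluded_middle_informative (P y)),
           (excluded_middle_informative (P z)); tauto || lra.
Qed.

Lemma chi_ge1 (P : S -> Prop) y : chi P y >= 1 -> P y.
Proof. unfold chi; destruct (excluded_middle_informative (P y)); auto; lra. Qed.

Lemma under_chi_pt (P : S -> Prop) x : P x -> under (chi P) (chi_compl P) (pt x 1 0).
Proof.
  intro Hx; apply under_pt; try lra; unfold chi_compl, chi;
    destruct (excluded_middle_informative (P x)); tauto || lra.
Qed.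

Variable op : S -> S -> S.

Lemma chi_left_ideal (P : S -> Prop) :
  (forall s y, P y -> P (op s y)) -> IF_left_ideal op (chi P) (chi_compl P).
Proof.
  intro HP; split; [apply chi_IF_subset|].
  intros s y; unfold chi_compl; pose proof (chi_mono P (HP s y)); lra.
Qed.

Lemma chi_right_ideal (P : S -> Prop) :
  (forall y s, P y -> P (op y s)) -> IF_right_ideal op (chi P) (chi_compl P).
Proof.
  intro HP; split; [apply chi_IF_subset|].
  intros y s; unfold chi_compl; pose proof (chi_mono P (HP y s)); lra.
Qed.

Hypothesis Hassoc : associative op.

Definition principal_left (x y : S) : Prop := y = x \/ exists s, y = op s x.

Definition principal_right (x y : S) : Prop := y = x \/ exists t, y = op x t.

Lemma principal_left_closed (x : S) :
  forall s y, principal_left x y -> principal_left x (op s y).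
Proof.
  intros s y [-> | [t ->]]; right; [now exists s | exists (op s t); apply Hassoc].
Qed.

Lemma principal_right_closed (x : S) :
  forall y s, principal_right x y -> principal_right x (op y s).
Proof.
  intros y s [-> | [t ->]]; right; [now exists s | exists (op t s); symmetry; apply Hassoc].
Qed.

Lemma intra_regular_of_principal_factors x u v :
  x = op u v -> principal_left x u -> principal_right x v ->
  exists a b, x = op (op a (op x x)) b.
Proof.
  intros Huv [-> | [s ->]] [-> | [t ->]].
  - exists x, x; now rewrite <- !Huv.
  - exists x, (op t t).
    transitivity (op x (op (op x (op x t)) t)); [now rewrite <- Huv|].
    now rewrite !Hassoc.
  - exists (op s s), x.
    transitivity (op (op s (op (op s x) x)) x); [now rewrite <- Huv|].
    now rewrite !Hassoc.
  - exists s, t; rewrite Huv at 1; rewrite !Hassoc; reflexivity.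
Qed.

End CharacteristicIdeals.

Definition ideal_inter_in_prod (S : Type) (op : S -> S -> S) : Prop :=
  forall muA nuA muB nuB : S -> R,
    IF_left_ideal op muA nuA -> IF_right_ideal op muB nuB ->
    forall p, under muA nuA p -> under muB nuB p ->
      set_prod op (under muA nuA) (under muB nuB) p.

Lemma ideal_inter_in_prod_of_intra_regular (S : Type) (op : S -> S -> S) :
  associative op -> intra_regular op -> ideal_inter_in_prod op.
Proof.
  intros Hassoc Hir muA nuA muB nuB [_ HA] [HsubB HB] p
    (x & a & b & Hp & HmuA & HnuA) HpB.
  destruct (under_at_point HsubB Hp HpB) as [HmuB HnuB].
  destruct (Hir x) as (c & d & Hx).
  pose proof Hp as (Ha & Hb & Hab & _).
  destruct (HA c x), (HB x d).
  exists (pt (op c x) a b), (pt (op x d) a b); split; [|split].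
  - apply under_pt; lra.
  - apply under_pt; lra.
  - apply point_prod_pt.
    replace (op (op c x) (op x d)) with x; [exact Hp|].
    rewrite Hx at 1; rewrite !Hassoc; reflexivity.
Qed.

Lemma intra_regular_of_ideal_inter_in_prod (S : Type) (op : S -> S -> S) :
  associative op -> ideal_inter_in_prod op -> intra_regular op.
Proof.
  intros Hassoc H x.
  assert (Hpt : is_point (pt x 1 0) x 1 0) by (apply pt_is_point; lra).
  destruct (H _ _ _ _ (chi_left_ideal op _ (principal_left_closed Hassoc (x:=x)))
                      (chi_right_ideal op _ (principal_right_closed Hassoc (x:=x)))
                      (pt x 1 0)
                      (under_chi_pt _ _ (or_introl eq_refl))
                      (under_chi_pt _ _ (or_introl eq_refl)))
    as (q & q' & Hq & Hq' & Hprod).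
  destruct (point_prod_full Hprod Hpt) as (u & v & bu & bv & Huv & Hu & Hv).
  apply (intra_regular_of_principal_factors Hassoc Huv);
    apply (chi_ge1 _); eapply under_full_point; eassumption.
Qed.

Theorem theorem3p14 (S : Type) (op : S -> S -> S) (Hassoc : associative op) :
  intra_regular op <->
  (forall muA nuA muB nuB : S -> R,
     IF_left_ideal op muA nuA -> IF_right_ideal op muB nuB ->
     forall p, under muA nuA p -> under muB nuB p ->
       set_prod op (under muA nuA) (under muB nuB) p).
Proof.
  split.
  - exact (ideal_inter_in_prod_of_intra_regular Hassoc).
  - exact (intra_regular_of_ideal_inter_in_prod Hassoc).
Qed.
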